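(* Let $G$ be a connected graph with $|V(G)| \ge 3$. Then $\det(G) \le 2\det'(G)$.
   Context: A vertex subset $S$ of $G$ is a vertex determining set if the only automorphism of $G$ fixing every vertex of $S$ is the identity; the determining number $\det(G)$ is the minimum size of a vertex determining set. For a graph $G$ with at most one isolated vertex and no component isomorphic to $K_2$, an edge subset $T$ is an edge determining set if the only automorphism $\phi$ of $G$ satisfying $\{\phi(u),\phi(v)\}=\{u,v\}$ for all $\{u,v\}\in T$ is the identity; the determining index $\det'(G)$ is the minimum size of an edge determining set. *)

From mathcomp Require Import all_boot all_fingroup.
Set Implicit Arguments. Unset Strict Implicit. Unset Printing Implicit Defensive.

Definition simple_graph (T : finType) (e : rel T) : Prop :=
  symmetric e /\ irreflexive e.

Definition connected_graph (T : finType) (e : rel T) : Prop :=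
  forall x y : T, connect e x y.

Definition is_aut (T : finType) (e : rel T) (p : {perm T}) : bool :=
  [forall x, forall y, e (p x) (p y) == e x y].

Definition is_edge (T : finType) (e : rel T) (A : {set T}) : bool :=
  [exists u, exists v, e u v && (A == [set u; v])].

Definition vdet_set (T : finType) (e : rel T) (S : {set T}) : bool :=
  [forall p : {perm T}, (is_aut e p && [forall x in S, p x == x]) ==> (p == 1%g)].

Definition edet_set (T : finType) (e : rel T) (D : {set {set T}}) : bool :=
  [forall A in D, is_edge e A] &&
  [forall p : {perm T}, (is_aut e p && [forall A in D, (p @: A) == A]) ==> (p == 1%g)].

(* determining number: minimum size of a vertex determining set
   (setT is always one, so #|T| is a correct default) *)
Definition det_num (T : finType) (e : rel T) : nat :=
  \big[minn/#|T|]_(S : {set T} | vdet_set e S) #|S|.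

(* determining index: minimum size of an edge determining set
   (the default #|{set {set T}}| is never attained under the paper's hypotheses) *)
Definition det_index (T : finType) (e : rel T) : nat :=
  \big[minn/#|{set {set T}}|]_(D : {set {set T}} | edet_set e D) #|D|.

From HB Require Import structures.
From mathcomp Require Import all_boot all_fingroup.

Set Implicit Arguments.
Unset Strict Implicit.
Unset Printing Implicit Defensive.

(* If an automorphism maps each edge of an edge determining set D onto
   itself, it is the identity; an automorphism fixing every endpoint of the
   edges of D does so, hence the at most 2|D| endpoints form a vertex
   determining set. *)

HB.instance Definition _ := SemiGroup.isComLaw.Build nat minn minnA minnC.

Section BigMinNat.

Variables (I : finType) (P : pred I) (F : I -> nat) (x : nat).

Lemma bigminn_le i : P i -> \big[minn/x]_(j | P j) F j <= F i.
Proof. by move=> Pi; rewrite (bigD1 i Pi) geq_minl. Qed.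

Lemma bigminn_le_idx : \big[minn/x]_(j | P j) F j <= x.
Proof. by elim/big_rec: _ => // j m _ le_mx; rewrite geq_min le_mx orbT. Qed.

End BigMinNat.

Lemma card_le_card_setset (T : finType) : #|T| <= #|{set {set T}}|.
Proof.
by apply: (@leq_card _ _ (fun x : T => [set [set x]])) => x y /set1_inj/set1_inj.
Qed.

Section DeterminingSets.

Variables (T : finType) (e : rel T).

Lemma det_num_le_vdet (S : {set T}) : vdet_set e S -> det_num e <= #|S|.
Proof. exact: bigminn_le. Qed.

Lemma det_num_le_card : det_num e <= #|T|.
Proof. exact: bigminn_le_idx. Qed.

Lemma card_cover_edges (D : {set {set T}}) :
  [forall A in D, is_edge e A] -> #|cover D| <= 2 * #|D|.
Proof.
move=> /forall_inP D_edges.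
apply: leq_trans (leq_card_cover D) _.
rewrite mulnC -sum_nat_const; apply: leq_sum => A /D_edges.
by case/existsP=> u /existsP[v /andP[_ /eqP->]]; rewrite cards2; case: (u != v).
Qed.

Lemma edet_cover_vdet (D : {set {set T}}) :
  edet_set e D -> vdet_set e (cover D).
Proof.
case/andP=> _ /forallP D_det; apply/forallP=> p.
apply/implyP=> /andP[p_aut /forall_inP p_fix].
apply: (implyP (D_det p)); rewrite p_aut; apply/forall_inP=> A DA.
have fixA y : y \in A -> p y = y by move=> Ay; apply/eqP/p_fix/bigcupP; exists A.
by rewrite -[X in _ == X]imset_id; apply/eqP/eq_in_imset.
Qed.

Lemma det_num_le_edet (D : {set {set T}}) :
  edet_set e D -> det_num e <= 2 * #|D|.
Proof.
move=> D_det; have /andP[D_edges _] := D_det.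
exact: leq_trans (det_num_le_vdet (edet_cover_vdet D_det)) (card_cover_edges D_edges).
Qed.

End DeterminingSets.

(* The hypotheses only ensure that an edge determining set exists; the bound
   also holds against the default value of det_index, so they are not used. *)
Theorem theorem5 (T : finType) (e : rel T) :
  simple_graph e -> connected_graph e -> 3 <= #|T| ->
  det_num e <= 2 * det_index e.
Proof.
move=> _ _ _; apply: (big_ind (fun m => det_num e <= 2 * m)).
- apply: leq_trans (det_num_le_card e) _.
  by apply: leq_trans (card_le_card_setset T) _; rewrite leq_pmull.
- by move=> a b le_a le_b; rewrite /minn; case: ifP.
- exact: det_num_le_edet.
Qed.
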